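(* Let $p\in[1,\infty)$. If $\lim_{|x|\to\infty}\int_{-\infty}^{\infty}G(x,t)\,dt=0$, then $$\lim_{N\to\infty}\ \sup_{\|f\|_p\le1}\int_{|x|\ge N}|(Gf)(x)|^p\,dx=0,$$ the supremum being over $f\in L_p(\mathbb R)$ with $\|f\|_p\le 1$.
   Context: Let $q:\mathbb R\to\mathbb R$ be measurable with $q\in L_1^{\mathrm{loc}}(\mathbb R)$ and $q(x)\ge1$ a.e. A principal fundamental system of solutions (PFSS) of $z''=q(x)z$ is a pair $u,v$ of solutions ($C^1$, derivative locally absolutely continuous, equation a.e.) such that for all $x$: $u>0$, $v>0$, $u'<0$, $v'>0$, $v'u-u'v=1$, $u(x)=v(x)\int_x^\infty v(t)^{-2}dt$, and $u,u'\to0$ as $x\to\infty$, $v,v'\to0$ as $x\to-\infty$, $v,v'\to\infty$ as $x\to\infty$, $u,|u'|\to\infty$ as $x\to-\infty$. Fix a PFSS $\{u,v\}$. The Green function is $G(x,t)=u(x)v(t)$ for $x\ge t$ and $G(x,t)=u(t)v(x)$ for $x\le t$, and $(Gf)(x)=\int_{-\infty}^\infty G(x,t)f(t)\,dt$. *)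

From HB Require Import structures.
From mathcomp Require Import all_boot all_order all_algebra.
From mathcomp Require Import all_classical all_reals all_analysis.
Set Implicit Arguments. Unset Strict Implicit. Unset Printing Implicit Defensive.
Import Order.TTheory GRing.Theory Num.Theory.
Import numFieldNormedType.Exports.
Local Open Scope classical_set_scope.
Local Open Scope ring_scope.

Definition abs_cont_on (R : realType) (a b : R) (f : R -> R) : Prop :=
  forall eps : R, 0 < eps -> exists2 delta : R, 0 < delta &
    forall (n : nat) (l r : nat -> R),
      (forall i, (i < n)%N -> a <= l i /\ l i <= r i /\ r i <= b) ->
      (forall i j, (i < n)%N -> (j < n)%N -> i <> j -> r i <= l j \/ r j <= l i) ->
      \sum_(i < n) (r i - l i) < delta ->
      \sum_(i < n) `|f (r i) - f (l i)| < eps.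

Definition loc_abs_cont (R : realType) (f : R -> R) : Prop :=
  forall a b : R, a <= b -> abs_cont_on a b f.

Definition admissible_q (R : realType) (q : R -> R) : Prop :=
  measurable_fun [set: R] q /\
  (forall a b : R, (@lebesgue_measure R).-integrable `[a, b] (EFin \o q)) /\
  {ae @lebesgue_measure R, forall x, 1 <= q x}.

Definition is_solution (R : realType) (q z z' : R -> R) : Prop :=
  (forall x : R, is_derive x (1 : R) z (z' x)) /\
  continuous z' /\
  loc_abs_cont z' /\
  {ae @lebesgue_measure R, forall x : R, is_derive x (1:R) z' (q x * z x)}.

Definition PFSS (R : realType) (q u u' v v' : R -> R) : Prop :=
  is_solution q u u' /\ is_solution q v v' /\
  (forall x, 0 < u x) /\ (forall x, 0 < v x) /\
  (forall x, u' x < 0) /\ (forall x, 0 < v' x) /\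
  (forall x, v' x * u x - u' x * v x = 1) /\
  (forall x, ((u x)%:E = (v x)%:E *
       \int[@lebesgue_measure R]_(t in `[x, +oo[) ((v t) ^-2)%:E)%E) /\
  u x @[x --> +oo] --> 0 /\ u' x @[x --> +oo] --> 0 /\
  v x @[x --> -oo] --> 0 /\ v' x @[x --> -oo] --> 0 /\
  v x @[x --> +oo] --> +oo /\ v' x @[x --> +oo] --> +oo /\
  u x @[x --> -oo] --> +oo /\ `|u' x| @[x --> -oo] --> +oo.

Definition green (R : realType) (u v : R -> R) (x t : R) : R :=
  if t <= x then u x * v t else u t * v x.

Definition green_op (R : realType) (u v f : R -> R) (x : R) : \bar R :=
  (\int[@lebesgue_measure R]_t (green u v x t * f t)%:E)%E.

From HB Require Import structures.
From mathcomp Require Import all_boot all_order all_algebra.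
From mathcomp Require Import all_classical all_reals all_analysis.
From mathcomp Require Import measurable_realfun.
Import Order.TTheory GRing.Theory Num.Theory.
Import numFieldNormedType.Exports.
Local Open Scope classical_set_scope.
Local Open Scope ring_scope.

(* Gf(x) averages f against the weight G(x, .), whose mass
   K(x) = \int G(x,t) dt is at most 1 for |x| large, so by Hoelder
   |Gf(x)|^p <= \int G(x,t) |f(t)|^p dt.  Integrating over |x| >= N and
   exchanging the integrals leaves \int |f|^p times the tail mass
   \int_{|x| >= N} G(x,t) dx.  By symmetry of G this is at most K(t) when
   |t| >= N; when |t| < N, the monotonicity of u and v gives
   G(x,t) <= G(N,x) + G(-N,x) on |x| >= N, so it is at most K(N) + K(-N).
   Both bounds vanish as N -> +oo. *)

Lemma is_derive_continuous {R : realType} {f f' : R -> R} :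
  (forall x, is_derive x (1 : R) f (f' x)) -> continuous f.
Proof.
move=> df x; apply: differentiable_continuous.
by apply/derivable1_diffP; exact: (@ex_derive _ _ _ _ _ _ _ (df x)).
Qed.

Lemma ge0_is_derive_nondecreasing {R : realType} {f f' : R -> R} :
  (forall x, is_derive x (1 : R) f (f' x)) -> (forall x, 0 <= f' x) ->
  {homo f : x y / x <= y}.
Proof.
move=> df f'0 x y xy.
have df1 z : derivable f z 1 := @ex_derive _ _ _ _ _ _ _ (df z).
apply: (@ger0_derive1_ndecr _ f x y) => //.
- by move=> z _; rewrite derive1E (@derive_val _ _ _ _ _ _ _ (df z)).
- by apply: derivable_within_continuous => z _; exact: df1.
Qed.

Lemma le0_is_derive_nonincreasing {R : realType} {f f' : R -> R} :
  (forall x, is_derive x (1 : R) f (f' x)) -> (forall x, f' x <= 0) ->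
  {homo f : x y /~ x <= y}.
Proof.
move=> df f'0 x y xy; rewrite -lerN2.
apply: (@ge0_is_derive_nondecreasing _ (- f) (- f')) => // z.
by rewrite oppr_ge0.
Qed.

Local Open Scope ereal_scope.

Section weighted_integral_inequalities.
Context d (T : measurableType d) (R : realType).
Variable mu : {measure set T -> \bar R}.

(* The nonnegative integral is a supremum over simple minorants, so it is
   monotone without any measurability assumption. *)
Lemma ge0_le_integral_nomeas (D : set T) (f1 f2 : T -> \bar R) :
  (forall x, D x -> 0 <= f1 x) -> (forall x, D x -> f1 x <= f2 x) ->
  \int[mu]_(x in D) f1 x <= \int[mu]_(x in D) f2 x.
Proof.
move=> f10 f12.
rewrite !ge0_integralE // => [|x Dx]; last exact: le_trans (f10 x Dx) (f12 x Dx).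
apply: ereal_sup_le => _ [h hf <-]; exists h => //= x.
apply: le_trans (hf x) _; rewrite /patch; case: ifP => //= /[!inE] xD.
exact: f12.
Qed.

Lemma Lnorm_le1E (f : T -> R) (r : R) : (0 < r)%R ->
  ('N[mu]_r%:E[EFin \o f] <= 1) = (\int[mu]_t (`|f t| `^ r)%:E <= 1).
Proof.
move=> r_gt0; set N := 'N[mu]_r%:E[_].
have N_ge0 : 0 <= N by exact: Lnorm_ge0.
have <- : N `^ r = \int[mu]_t (`|f t| `^ r)%:E.
  by rewrite powR_Lnorm ?gt_eqF //; apply: eq_integral.
have in_ge0 (x : \bar R) : 0 <= x -> x \in `[0, +oo] by rewrite in_itv /= leey andbT.
apply/idP/idP => [N_le1|Nr_le1].
  rewrite -(poweR1r r); apply: gt0_ler_poweR; rewrite ?in_ge0 //; exact: ltW.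
have -> : N = (N `^ r) `^ r^-1 by rewrite -poweRrM mulfV ?lt0r_neq0 // poweRe1.
rewrite -(poweR1r r^-1).
by apply: gt0_ler_poweR; rewrite ?in_ge0 ?invr_ge0 ?poweR_ge0 // ltW.
Qed.

Variables (g f : T -> R).
Hypotheses (mg : measurable_fun [set: T] g) (mf : measurable_fun [set: T] f).
Hypothesis g_gt0 : forall t, (0 < g t)%R.
Hypothesis int_g_le1 : \int[mu]_t (g t)%:E <= 1.

Let g_ge0 t : (0 <= g t)%R. Proof. exact/ltW. Qed.

(* Hoelder with exponents p/(p-1) and p for g^(1-1/p) and g^(1/p) |f|; the first
   factor has norm (\int g)^(1-1/p) <= 1. *)
Lemma hoelder_weighted (p : R) : (1 < p)%R ->
  (\int[mu]_t (g t * `|f t|)%:E) `^ p <= \int[mu]_t (g t * `|f t| `^ p)%:E.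
Proof.
move=> p_gt1; have p_gt0 : (0 < p)%R by rewrite (lt_trans _ p_gt1).
set a := (1 - p^-1)%R.
have a_gt0 : (0 < a)%R by rewrite subr_gt0 invf_lt1.
have inva_gt0 : (0 < a^-1)%R by rewrite invr_gt0.
pose F1 t := (g t `^ a)%R; pose F2 t := (g t `^ p^-1 * `|f t|)%R.
have mF1 : measurable_fun [set: T] F1 := measurableT_comp (measurable_powR a) mg.
have mF2 : measurable_fun [set: T] F2.
  apply: measurable_funM; first exact: (measurableT_comp (measurable_powR _) mg).
  exact: measurableT_comp.
have := hoelder mu mF1 mF2 inva_gt0 p_gt0; rewrite invrK /a subrK => /(_ erefl).
rewrite [X in X <= _ -> _](_ : _ = \int[mu]_t (g t * `|f t|)%:E); last first.
  rewrite Lnorm1; apply: eq_integral => t _ /=; congr (_%:E).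
  rewrite /F1 /F2 mulrA -powRD; last by rewrite (gt_eqF (g_gt0 t)) implybT.
  by rewrite subrK powRr1 // ger0_norm // mulr_ge0.
have NF1 : 'N[mu]_((1 - p^-1)^-1)%:E[EFin \o F1] <= 1.
  rewrite Lnorm_le1E //; under eq_integral => t _ do
    rewrite /F1 ger0_norm ?powR_ge0 // -powRrM mulfV ?(lt0r_neq0 a_gt0) // powRr1 //.
  exact: int_g_le1.
set N2 := 'N[_]_p%:E[_].
have eN2 : N2 `^ p = \int[mu]_t (g t * `|f t| `^ p)%:E.
  rewrite /N2 powR_Lnorm ?(lt0r_neq0 p_gt0) //; apply: eq_integral => t _ /=.
  congr (_%:E); rewrite /F2 ger0_norm ?mulr_ge0 ?powR_ge0 //.
  by rewrite powRM ?powR_ge0 // -powRrM mulVf ?(lt0r_neq0 p_gt0) // powRr1.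
move=> hoelder_F; rewrite -eN2; apply: gt0_ler_poweR; first exact: ltW.
- by rewrite in_itv /= leey andbT integral_ge0 // => t _; rewrite lee_fin mulr_ge0.
- by rewrite in_itv /= leey andbT Lnorm_ge0.
apply: (le_trans hoelder_F); rewrite -[leRHS]mul1e; apply: lee_wpmul2r NF1; exact: Lnorm_ge0.
Qed.

Lemma powR_abse_integral_weighted_le (p : R) : (1 <= p)%R ->
  `|\int[mu]_t (g t * f t)%:E| `^ p <= \int[mu]_t (g t * `|f t| `^ p)%:E.
Proof.
move=> p_ge1.
have abs_le : `|\int[mu]_t (g t * f t)%:E| <= \int[mu]_t (g t * `|f t|)%:E.
  apply: (le_trans (le_abse_integral mu _ _)) => //.
    by apply/measurable_EFinP; exact: measurable_funM.
  apply: ge0_le_integral_nomeas => t _; first exact: abse_ge0.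
  by rewrite abse_EFin normrM (ger0_norm (g_ge0 t)).
have [->|p_neq1] := eqVneq p 1%R.
  rewrite poweRe1 //; apply: (le_trans abs_le); apply: ge0_le_integral_nomeas => t _.
    by rewrite lee_fin mulr_ge0.
  by rewrite powRr1.
have p_gt1 : (1 < p)%R by rewrite lt_neqAle eq_sym p_neq1.
apply: (le_trans _ (hoelder_weighted _ p_gt1)); apply: gt0_ler_poweR => //.
- exact: le_trans p_ge1.
- by rewrite in_itv /= leey andbT abse_ge0.
- by rewrite in_itv /= leey andbT integral_ge0 // => t _; rewrite lee_fin mulr_ge0.
Qed.

End weighted_integral_inequalities.

Local Close Scope ereal_scope.

Lemma integral_set_if d (T : measurableType d) (R : realType)
  (mu : {measure set T -> \bar R}) (P : pred T) (f : T -> \bar R) :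
  (\int[mu]_(x in [set x | P x]) f x = \int[mu]_x (if P x then f x else 0))%E.
Proof. by rewrite integral_mkcond; apply: eq_integral => x _; rewrite /patch mem_setE. Qed.

Lemma measurable_norm_ge {R : realType} (N : R) : measurable [set x : R | N <= `|x|]%R.
Proof.
rewrite -[X in measurable X]setTI.
by apply: measurable_fun_le => //; exact: normr_measurable.
Qed.

Section green_function.
Variables (R : realType) (u v : R -> R).

Lemma green_sym x t : green u v x t = green u v t x.
Proof.
rewrite /green; have [tx|xt] := leP t x; last by rewrite (ltW xt).
have [xt|//] := leP x t.
by have -> : x = t by apply/le_anti; rewrite xt tx.
Qed.

Hypotheses (u_gt0 : forall x, 0 < u x) (v_gt0 : forall x, 0 < v x).
Hypotheses (u_cont : continuous u) (v_cont : continuous v).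

Lemma green_gt0 x t : 0 < green u v x t.
Proof. by rewrite /green; case: ifP => _; apply: mulr_gt0. Qed.

Lemma green_ge0 x t : 0 <= green u v x t.
Proof. exact/ltW/green_gt0. Qed.

Let measurable_u := continuous_measurable_fun u_cont.
Let measurable_v := continuous_measurable_fun v_cont.

Lemma measurable_green x : measurable_fun [set: R] (green u v x).
Proof.
apply: measurable_fun_ifT; first exact: measurable_fun_ler.
- exact: measurable_funM.
- exact: measurable_funM.
Qed.

Lemma measurable_green_swap t : measurable_fun [set: R] (green u v ^~ t).
Proof. by under eq_fun do rewrite green_sym; exact: measurable_green. Qed.

Lemma measurable_green_pair :
  measurable_fun [set: R * R] (fun z => green u v z.1 z.2).
Proof.
apply: measurable_fun_ifT; first exact: measurable_fun_ler.
- exact: measurable_funM (measurableT_comp measurable_u measurable_fst)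
                         (measurableT_comp measurable_v measurable_snd).
- exact: measurable_funM (measurableT_comp measurable_u measurable_snd)
                         (measurableT_comp measurable_v measurable_fst).
Qed.

Hypotheses (u_nonincr : {homo u : x y /~ x <= y}) (v_nondecr : {homo v : x y / x <= y}).

Lemma green_le_boundary N x t : `|t| < N -> N <= `|x| ->
  green u v x t <= green u v N x + green u v (- N) x.
Proof.
rewrite ltr_norml => /andP[Nt tN] Nx.
have [x0|x0] := leP 0 x.
  rewrite ger0_norm // in Nx.
  have -> : green u v x t = u x * v t by rewrite /green (le_trans (ltW tN) Nx).
  have -> : green u v N x = u x * v N by rewrite green_sym /green Nx.
  by rewrite -[leLHS]addr0 lerD ?green_ge0 // ler_pM2l // v_nondecr // ltW.
rewrite ltr0_norm // lerNr in Nx.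
have -> : green u v x t = u t * v x.
  by rewrite /green ifF //; apply/negbTE; rewrite -ltNge (le_lt_trans Nx).
have -> : green u v (- N) x = u (- N) * v x by rewrite /green Nx.
by rewrite -[leLHS]add0r lerD ?green_ge0 // ler_pM2r // u_nonincr // ltW.
Qed.

Local Open Scope ereal_scope.

Let K s := \int[@lebesgue_measure R]_t (green u v s t)%:E.

Lemma integral_tail_green_le (N eps t : R) : (0 <= eps)%R ->
  (forall s, (N <= `|s|)%R -> K s <= eps%:E) ->
  \int[@lebesgue_measure R]_(x in [set x : R | N <= `|x|]%R) (green u v x t)%:E
    <= (eps + eps)%:E.
Proof.
move=> eps_ge0 K_le.
have mG s : measurable_fun [set: R] (fun x => (green u v s x)%:E).
  by apply/measurable_EFinP; exact: measurable_green.
have G0 s x : [set: R] x -> 0 <= (green u v s x)%:E by rewrite lee_fin green_ge0.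
have [Nt|tN] := leP N (`|t|)%R.
  apply: (@le_trans _ _ (\int[@lebesgue_measure R]_(x in [set x : R | N <= `|x|]%R)
      (green u v t x)%:E)).
    by apply: ge0_le_integral_nomeas => x _; rewrite lee_fin ?green_ge0 // green_sym.
  apply: le_trans (ge0_subset_integral (@lebesgue_measure R) (measurable_norm_ge N)
                    measurableT (mG t) (G0 t) (@subsetT _ _)) _.
  by rewrite (le_trans (K_le t Nt)) // lee_fin lerDl.
have N_ge0 : (0 <= N)%R by rewrite (le_trans _ (ltW tN)).
apply: (@le_trans _ _ (\int[@lebesgue_measure R]_(x in [set x : R | N <= `|x|]%R)
    ((green u v N x)%:E + (green u v (- N) x)%:E))).
  apply: ge0_le_integral_nomeas => x Nx; first by rewrite lee_fin green_ge0.
  by rewrite -EFinD lee_fin green_le_boundary.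
have G0D x : [set: R] x -> 0 <= (green u v N x)%:E + (green u v (- N) x)%:E.
  by move=> _; rewrite adde_ge0 ?lee_fin ?green_ge0.
apply: le_trans (ge0_subset_integral (@lebesgue_measure R) (measurable_norm_ge N)
                  measurableT (emeasurable_funD (mG N) (mG (- N)%R)) G0D (@subsetT _ _)) _.
rewrite ge0_integralD //; [|exact: G0|exact: mG|exact: G0|exact: mG].
by rewrite EFinD leeD // K_le // ?normrN ger0_norm.
Qed.

Lemma integral_tail_green_weighted_le (N eps : R) (h : R -> R) :
  measurable_fun [set: R] h -> (forall t, 0 <= h t)%R -> (0 <= eps)%R ->
  (forall s, (N <= `|s|)%R -> K s <= eps%:E) ->
  \int[@lebesgue_measure R]_(x in [set x : R | N <= `|x|]%R)
     \int[@lebesgue_measure R]_t (green u v x t * h t)%:E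
    <= (eps + eps)%:E * \int[@lebesgue_measure R]_t (h t)%:E.
Proof.
move=> mh h_ge0 eps_ge0 K_le.
pose cut x t := if (N <= `|x|)%R then green u v x t else 0%R.
have cut_ge0 x t : (0 <= cut x t)%R by rewrite /cut; case: ifP => // _; exact: green_ge0.
have mcut : measurable_fun [set: R * R] (fun z => cut z.1 z.2).
  apply: measurable_fun_ifT; last exact: measurable_cst.
    apply: measurable_fun_ler => //.
    by apply: measurableT_comp; [exact: normr_measurable|exact: measurable_fst].
  exact: measurable_green_pair.
pose Phi (z : R * R) := (cut z.1 z.2 * h z.2)%:E.
have mPhi : measurable_fun [set: R * R] Phi.
  apply/measurable_EFinP; apply: measurable_funM mcut _.
  exact: measurableT_comp mh measurable_snd.
have Phi_ge0 z : 0 <= Phi z by rewrite lee_fin mulr_ge0.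
have -> : \int[@lebesgue_measure R]_(x in [set x : R | N <= `|x|]%R)
            \int[@lebesgue_measure R]_t (green u v x t * h t)%:E =
          \int[@lebesgue_measure R]_x \int[@lebesgue_measure R]_t Phi (x, t).
  rewrite integral_set_if; apply: eq_integral => x _; rewrite /Phi /cut /=.
  case: ifP => // _.
  by under eq_integral do rewrite mul0r; rewrite integral0.
rewrite (fubini_tonelli (m1 := @lebesgue_measure R) (m2 := @lebesgue_measure R)
          Phi mPhi Phi_ge0) /=.
rewrite -ge0_integralZl //; last 3 first.
- by apply/measurable_EFinP.
- by move=> t _; rewrite lee_fin.
- by rewrite lee_fin addr_ge0.
apply: ge0_le_integral_nomeas => t _; first exact: integral_ge0.
rewrite /Phi /=; under eq_integral => x _ do rewrite EFinM.
rewrite ge0_integralZr //; last 3 first.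
- apply/measurable_EFinP; apply: measurable_fun_ifT; last exact: measurable_cst.
    by apply: measurable_fun_ler => //; exact: normr_measurable.
  exact: measurable_green_swap.
- by move=> x _; rewrite lee_fin.
- by rewrite lee_fin.
apply: lee_wpmul2r; first by rewrite lee_fin.
apply: le_trans (integral_tail_green_le N eps t eps_ge0 K_le).
rewrite integral_set_if; apply: ge0_le_integral_nomeas => x _; first by rewrite lee_fin.
by rewrite /cut; case: ifP.
Qed.

Lemma integral_tail_green_op_le (p N eps : R) (f : R -> R) :
  (1 <= p)%R -> (0 <= eps <= 1)%R ->
  measurable_fun [set: R] f -> 'N[@lebesgue_measure R]_p%:E[EFin \o f] <= 1 ->
  (forall s, (N <= `|s|)%R -> K s <= eps%:E) ->
  \int[@lebesgue_measure R]_(x in [set x : R | N <= `|x|]%R) (`|green_op u v f x| `^ p)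
    <= (eps + eps)%:E.
Proof.
move=> p_ge1 /andP[eps_ge0 eps_le1] mf Nf K_le.
have p_gt0 : (0 < p)%R by rewrite (lt_le_trans _ p_ge1).
have mfp : measurable_fun [set: R] (fun t => `|f t| `^ p)%R.
  apply: (@measurableT_comp _ _ _ _ _ _ (@powR R ^~ p)) => //; exact: measurableT_comp.
apply: (@le_trans _ _ (\int[@lebesgue_measure R]_(x in [set x : R | N <= `|x|]%R)
    \int[@lebesgue_measure R]_t (green u v x t * `|f t| `^ p)%:E)).
  apply: ge0_le_integral_nomeas => x Nx; first exact: poweR_ge0.
  apply: powR_abse_integral_weighted_le => //.
  - exact: measurable_green.
  - exact: green_gt0.
  - by rewrite (le_trans (K_le x Nx)) // lee_fin.
apply: le_trans (integral_tail_green_weighted_le N eps _ mfp _ eps_ge0 K_le) _.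
  by move=> t; exact: powR_ge0.
rewrite -[leRHS]mule1 lee_wpmul2l ?lee_fin ?addr_ge0 //.
by rewrite -Lnorm_le1E.
Qed.

End green_function.

Local Open Scope ereal_scope.

Lemma cvg0_at_infinity_bound {R : realType} {K : R -> \bar R} :
  K x @[x --> +oo%R] --> 0 -> K x @[x --> -oo%R] --> 0 ->
  forall eps : R, (0 < eps)%R ->
  exists M : R, forall s, (M <= `|s|)%R -> K s <= eps%:E.
Proof.
move=> Kp Kn eps eps_gt0.
have near_le (F : set_system R) : Filter F -> K x @[x --> F] --> 0 ->
    \forall x \near F, K x <= eps%:E.
  move=> FF /fine_cvgP[Kfin /cvgrPdist_le /(_ eps eps_gt0)].
  apply: filter_app; apply: filterS Kfin => x xfin.
  rewrite sub0r normrN /= => h.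
  by rewrite -(fineK xfin) lee_fin (le_trans (ler_norm _) h).
have [M1 [_ HM1]] := near_le _ _ Kp.
have [M2 [_ HM2]] := near_le _ _ Kn.
exists (Num.max (M1 + 1) (- M2 + 1))%R => s.
rewrite ge_max => /andP[h1 h2].
have [s0|s0] := leP 0%R s.
  apply: HM1; rewrite ger0_norm // in h1.
  by rewrite (lt_le_trans _ h1) // ltrDl.
apply: HM2; rewrite ltr0_norm // in h2.
by rewrite -ltrN2 (lt_le_trans _ h2) // ltrDl.
Qed.

Lemma ge0_cvge0_pinfty {R : realType} {S : R -> \bar R} :
  (forall N, 0 <= S N) ->
  (forall e : R, (0 < e)%R -> exists M : R, forall N, (M < N)%R -> S N <= e%:E) ->
  S N @[N --> +oo%R] --> 0.
Proof.
move=> S_ge0 S_le.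
have S_fin e M N : (M < N)%R -> (forall N, (M < N)%R -> S N <= e%:E) -> S N \is a fin_num.
  by move=> MN HM; rewrite ge0_fin_numE // (le_lt_trans (HM _ MN)) ?ltey.
apply/fine_cvgP; split.
  have [M HM] := S_le 1%R ltr01.
  by exists M; split; [exact: num_real | move=> N MN; exact: S_fin MN HM].
apply/cvgrPdist_le => e e_gt0; have [M HM] := S_le e e_gt0.
exists M; split; first exact: num_real.
move=> N MN; rewrite sub0r normrN /= ger0_norm ?fine_ge0 //.
by rewrite -lee_fin fineK ?HM //; exact: S_fin MN HM.
Qed.

Local Close Scope ereal_scope.

Theorem lemma5p4 (R : realType) (q u u' v v' : R -> R) (p : R) :
  admissible_q q ->
  PFSS q u u' v v' ->
  1 <= p ->
  (\int[@lebesgue_measure R]_t (green u v x t)%:E)%E @[x --> +oo] --> 0%E ->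
  (\int[@lebesgue_measure R]_t (green u v x t)%:E)%E @[x --> -oo] --> 0%E ->
  ereal_sup [set (\int[@lebesgue_measure R]_(x in [set x : R | (N <= `|x|)%R])
                     (`|green_op u v f x| `^ p))%E
            | f in [set f : R -> R | measurable_fun [set: R] f /\
                       ('N[@lebesgue_measure R]_p%:E[EFin \o f] <= 1)%E]]
    @[N --> +oo] --> 0%E.
Proof.
move=> _ [[du _] [[dv _] [u_gt0 [v_gt0 [u'_lt0 [v'_gt0 _]]]]]] p_ge1 Kp Kn.
have u_cont := is_derive_continuous du; have v_cont := is_derive_continuous dv.
have u_nonincr := le0_is_derive_nonincreasing du (fun x => ltW (u'_lt0 x)).
have v_nondecr := ge0_is_derive_nondecreasing dv (fun x => ltW (v'_gt0 x)).
apply: ge0_cvge0_pinfty => [N|e e_gt0].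
  apply: le_ereal_sup_tmp; eexists.
    exists (cst 0%R) => //; split; first exact: measurable_cst.
    rewrite (@eq_Lnorm _ _ _ _ _ _ (cst 0%E)) // Lnorm0 //.
    by rewrite eqe gt_eqF // (lt_le_trans _ p_ge1).
  by apply: integral_ge0 => x _; exact: poweR_ge0.
pose eps := Num.min (e / 2) 1.
have eps_gt0 : 0 < eps by rewrite lt_min ltr01 divr_gt0.
have [M HM] := cvg0_at_infinity_bound Kp Kn _ eps_gt0.
exists M => N MN; apply: ge_ereal_sup => _ [f [mf Nf] <-].
apply: (@le_trans _ _ (eps + eps)%:E).
  apply: integral_tail_green_op_le => //.
  - by rewrite (ltW eps_gt0) ge_min lexx orbT.
  - by move=> s Ns; apply: HM; rewrite (le_trans (ltW MN)).
by rewrite lee_fin [leRHS]splitr lerD // ge_min lexx.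
Qed.
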